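(* Let $\Psi$ be a performance metric that satisfies TP/TN monotonicity. Then $\Psi$ satisfies TP monotonicity.
   Context: Labels are binary. For predictions $\mathbf{s}\in\{0,1\}^n$ and labels $\mathbf{y}\in\{0,1\}^n$ let $\widehat{TP}=\frac1n\sum_i s_iy_i$, $\widehat{TN}=\frac1n\sum_i(1-s_i)(1-y_i)$, $v(\mathbf{s})=\frac1n\sum_i s_i$, $p(\mathbf{y})=\frac1n\sum_iy_i$ (assume $0<p<1$), true positive rate $r_p=\widehat{TP}/p$ and true negative rate $r_n=\widehat{TN}/(1-p)$. A metric $\Psi$ of the empirical confusion matrix can be written both as $\Psi=\Phi(\widehat{TP},v,p)$ and as $\Psi=\Gamma(r_p,r_n,p)$ (note $\widehat{TN}=1-v-p+\widehat{TP}$). $\Psi$ is TP monotonic if $u_1>u_2$ with $v,p$ fixed implies $\Phi(u_1,v,p)>\Phi(u_2,v,p)$. $\Psi$ is TP/TN monotonic if $r_{p1}>r_{p2}$ and $r_{n1}>r_{n2}$ with $p$ fixed imply $\Gamma(r_{p1},r_{n1},p)>\Gamma(r_{p2},r_{n2},p)$. *)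

From mathcomp Require Import all_boot all_order all_algebra.
Set Implicit Arguments. Unset Strict Implicit. Unset Printing Implicit Defensive.
Import Order.TTheory GRing.Theory Num.Theory.
Local Open Scope ring_scope.

Section Empirical.
Variable R : realFieldType.

(* predictions s and labels y on n samples, as functions 'I_n -> bool *)
Definition TPhat (n : nat) (s y : 'I_n -> bool) : R :=
  (\sum_(i < n) ((s i && y i : bool)%:R : R)) / n%:R.
Definition TNhat (n : nat) (s y : 'I_n -> bool) : R :=
  (\sum_(i < n) ((~~ s i && ~~ y i : bool)%:R : R)) / n%:R.
Definition vhat (n : nat) (s : 'I_n -> bool) : R :=
  (\sum_(i < n) ((s i : bool)%:R : R)) / n%:R.
Definition phat (n : nat) (y : 'I_n -> bool) : R :=
  (\sum_(i < n) ((y i : bool)%:R : R)) / n%:R.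
Definition rpos (n : nat) (s y : 'I_n -> bool) : R := TPhat s y / phat y.
Definition rneg (n : nat) (s y : 'I_n -> bool) : R := TNhat s y / (1 - phat y).

(* A metric Psi = Phi(TP, v, p); its representation Gamma(r_p, r_n, p) is
   obtained via TP = p r_p, TN = (1-p) r_n and v = 1 - p + TP - TN. *)
Definition Gamma_of (Phi : R -> R -> R -> R) (rp rn p : R) : R :=
  Phi (p * rp) (1 - p + p * rp - (1 - p) * rn) p.

Definition TP_monotonic (Phi : R -> R -> R -> R) : Prop :=
  forall (n1 n2 : nat) (s1 y1 : 'I_n1 -> bool) (s2 y2 : 'I_n2 -> bool),
    0 < phat y1 < 1 -> 0 < phat y2 < 1 ->
    vhat s1 = vhat s2 -> phat y1 = phat y2 ->
    TPhat s1 y1 > TPhat s2 y2 ->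
    Phi (TPhat s1 y1) (vhat s1) (phat y1) > Phi (TPhat s2 y2) (vhat s2) (phat y2).

Definition TPTN_monotonic (Phi : R -> R -> R -> R) : Prop :=
  forall (n1 n2 : nat) (s1 y1 : 'I_n1 -> bool) (s2 y2 : 'I_n2 -> bool),
    0 < phat y1 < 1 -> 0 < phat y2 < 1 ->
    phat y1 = phat y2 ->
    rpos s1 y1 > rpos s2 y2 -> rneg s1 y1 > rneg s2 y2 ->
    Gamma_of Phi (rpos s1 y1) (rneg s1 y1) (phat y1) >
    Gamma_of Phi (rpos s2 y2) (rneg s2 y2) (phat y2).

End Empirical.

From mathcomp Require Import all_boot all_order all_algebra.
From mathcomp Require Import ring lra.
Set Implicit Arguments. Unset Strict Implicit. Unset Printing Implicit Defensive.
Import Order.TTheory GRing.Theory Num.Theory.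
Local Open Scope ring_scope.

(* Since TP = p r_p and TN = 1 - v - p + TP = (1 - p) r_n, the representation
   Gamma evaluated at the empirical rates gives back Phi at (TP, v, p). For a
   fixed p, r_p grows with TP, and for fixed v and p so does TN, hence r_n:
   two confusion matrices with equal v and p and TP1 > TP2 have both rates
   strictly ordered, and TP/TN monotonicity compares their Phi values. *)

Section EmpiricalRates.
Variable R : realFieldType.

Lemma phat_gt0_size n (y : 'I_n -> bool) : 0 < phat R y -> (0 < n)%N.
Proof. by case: n y => [|n] y //; rewrite /phat big_ord0 mul0r ltxx. Qed.

Lemma TNhatE n (s y : 'I_n -> bool) : (0 < n)%N ->
  TNhat R s y = 1 - vhat R s - phat R y + TPhat R s y.
Proof.
move=> n_gt0; have n_neq0 : (n%:R : R) != 0 by rewrite pnatr_eq0 -lt0n.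
have count_TN : \sum_(i < n) ((~~ s i && ~~ y i : bool)%:R : R) =
    n%:R - \sum_(i < n) ((s i : bool)%:R : R) - \sum_(i < n) ((y i : bool)%:R : R)
    + \sum_(i < n) ((s i && y i : bool)%:R : R).
  rewrite -[n in n%:R]card_ord -sumr_const -!sumrB -big_split /=.
  by apply: eq_bigr => i _; case: (s i); case: (y i) => /=; ring.
rewrite /TNhat count_TN /vhat /phat /TPhat.
move: (\sum_(i < n) _) (\sum_(i < n) _) (\sum_(i < n) _) => a b c.
by field.
Qed.

Variables (n : nat) (s y : 'I_n -> bool).
Hypothesis phat_in01 : 0 < phat R y < 1.

Let phat_gt0 : 0 < phat R y. Proof. by case/andP: phat_in01. Qed.
Let one_sub_phat_gt0 : 0 < 1 - phat R y.
Proof. by case/andP: phat_in01 => _; rewrite subr_gt0. Qed.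

Lemma phat_rpos : phat R y * rpos R s y = TPhat R s y.
Proof. by rewrite /rpos mulrC divfK // gt_eqF. Qed.

Lemma one_sub_phat_rneg : (1 - phat R y) * rneg R s y = TNhat R s y.
Proof. by rewrite /rneg mulrC divfK // gt_eqF. Qed.

Lemma Gamma_of_rates (Phi : R -> R -> R -> R) :
  Gamma_of Phi (rpos R s y) (rneg R s y) (phat R y) = Phi (TPhat R s y) (vhat R s) (phat R y).
Proof.
rewrite /Gamma_of phat_rpos one_sub_phat_rneg TNhatE; last exact: phat_gt0_size phat_gt0.
by congr Phi; ring.
Qed.

End EmpiricalRates.

Lemma rates_lt_of_TPhat_lt (R : realFieldType) n1 n2 (s1 y1 : 'I_n1 -> bool) (s2 y2 : 'I_n2 -> bool) :
  0 < phat R y1 < 1 -> 0 < phat R y2 < 1 ->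
  vhat R s1 = vhat R s2 -> phat R y1 = phat R y2 ->
  TPhat R s2 y2 < TPhat R s1 y1 -> rpos R s2 y2 < rpos R s1 y1 /\ rneg R s2 y2 < rneg R s1 y1.
Proof.
move=> /andP[p1_gt0 _] /andP[p2_gt0 p2_lt1] v12 p12 TP12.
split; first by rewrite /rpos p12 ltr_pM2r ?invr_gt0.
rewrite /rneg p12 ltr_pM2r ?invr_gt0 ?subr_gt0 //.
rewrite (TNhatE _ s1 y1 (phat_gt0_size p1_gt0)) (TNhatE _ s2 y2 (phat_gt0_size p2_gt0)).
rewrite v12 p12; lra.
Qed.

Theorem proposition5 (R : realFieldType) (Phi : R -> R -> R -> R) :
  TPTN_monotonic Phi -> TP_monotonic Phi.
Proof.
move=> TPTN_mono n1 n2 s1 y1 s2 y2 p1_in01 p2_in01 v12 p12 TP12.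
have [rpos12 rneg12] := rates_lt_of_TPhat_lt p1_in01 p2_in01 v12 p12 TP12.
rewrite -(Gamma_of_rates s1 p1_in01) -(Gamma_of_rates s2 p2_in01).
exact: TPTN_mono.
Qed.
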